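(* Let $f$ be a Hamiltonian stationary torus. For every monochromatic holomorphic section $\alpha$ there is a unique $\mu\in\mathbb C_*$ such that $\alpha$ is $d^\mu$--parallel.
   Context: Identify $\mathbb R^4$ with $\mathbb H$ and $\mathbb C$ with $\mathrm{span}_{\mathbb R}\{1,i\}$; $\langle\cdot,\cdot\rangle$ is the Euclidean inner product on $\mathbb C\cong\mathbb R^2$. $\Gamma\subset\mathbb C$ a lattice, $\Gamma^*$ its dual lattice. A Hamiltonian stationary torus is a $\Gamma$-periodic conformal immersion $f:\mathbb C\to\mathbb H$ with $df=e^{j\beta/2}dz\,g$, $dz=dx+i\,dy$, $g$ nowhere zero, $\beta(z)=2\pi\langle\beta_0,z\rangle$, $0\ne\beta_0\in\Gamma^*$; convention $*dz=i\,dz$; left normal $N=e^{j\beta}i$. With $(dN)'=\frac12(dN-N*dN)$ define $H$ by $(dN)'=-df\,H$. For $\mu\in\mathbb C_*$, $d^\mu\alpha=d\alpha+\frac12df\,H\,(N\alpha(a-1)+\alpha b)$, $a=\frac{\mu+\mu^{-1}}2$, $b=\frac{\mu^{-1}-\mu}2i$ (acting from the right). With $h^{A,B}(\gamma)=e^{2\pi(\langle A,\gamma\rangle-i\langle B,\gamma\rangle)}$, $\Gamma^*_{A,B}=\{\delta\in\Gamma^*+\frac{\beta_0}2:|\delta-B|^2-|A|^2=\frac{|\beta_0|^2}4,\ \langle\delta-B,A\rangle=0\}$, $e_\delta(z)=e^{2\pi i\langle\delta,z\rangle}$, $\lambda_\delta=\frac2{\beta_0}(\delta-iA-B)$: a monochromatic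 holomorphic section is a nonzero complex multiple (on the right) of $e^{j\beta/2}(1-k\lambda_\delta)e_{\delta-B}e^{2\pi\langle A,\cdot\rangle}$ for some $(A,B)\in\mathbb C^2$ and $\delta\in\Gamma^*_{A,B}$. *)

From Stdlib Require Import Reals ZArith.
From Coquelicot Require Import Coquelicot.
Open Scope R_scope.

Record quat := Quat { q0 : R; q1 : R; q2 : R; q3 : R }.

Definition qzero : quat := Quat 0 0 0 0.
Definition qone  : quat := Quat 1 0 0 0.
Definition qi : quat := Quat 0 1 0 0.
Definition qj : quat := Quat 0 0 1 0.
Definition qk : quat := Quat 0 0 0 1.

Definition qadd (p q : quat) : quat :=
  Quat (q0 p + q0 q) (q1 p + q1 q) (q2 p + q2 q) (q3 p + q3 q).
Definition qopp (p : quat) : quat := Quat (- q0 p) (- q1 p) (- q2 p) (- q3 p).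
Definition qsub (p q : quat) : quat := qadd p (qopp q).
Definition qscal (r : R) (p : quat) : quat := Quat (r * q0 p) (r * q1 p) (r * q2 p) (r * q3 p).
Definition qmul (p q : quat) : quat :=
  Quat (q0 p * q0 q - q1 p * q1 q - q2 p * q2 q - q3 p * q3 q)
       (q0 p * q1 q + q1 p * q0 q + q2 p * q3 q - q3 p * q2 q)
       (q0 p * q2 q - q1 p * q3 q + q2 p * q0 q + q3 p * q1 q)
       (q0 p * q3 q + q1 p * q2 q - q2 p * q1 q + q3 p * q0 q).

Definition embC (z : C) : quat := Quat (fst z) (snd z) 0 0.

Definition expj (t : R) : quat := Quat (cos t) 0 (sin t) 0.

Definition cdot (u v : C) : R := fst u * fst v + snd u * snd v.
Definition cnorm2 (u : C) : R := cdot u u.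

Definition is_deriv_q (F : R -> quat) (t : R) (v : quat) : Prop :=
  is_derive (fun s => q0 (F s)) t (q0 v) /\ is_derive (fun s => q1 (F s)) t (q1 v) /\
  is_derive (fun s => q2 (F s)) t (q2 v) /\ is_derive (fun s => q3 (F s)) t (q3 v).
(* partial derivatives along dx and dy, i.e. the 1-form evaluated on d/dx, d/dy *)
Definition is_dx (F : C -> quat) (p : C) (v : quat) : Prop :=
  is_deriv_q (fun s => F (s, snd p)) (fst p) v.
Definition is_dy (F : C -> quat) (p : C) (v : quat) : Prop :=
  is_deriv_q (fun s => F (fst p, s)) (snd p) v.

Definition is_int (x : R) : Prop := exists n : Z, x = IZR n.
Definition in_lattice (w1 w2 : C) (g : C) : Prop :=
  exists m n : Z, g = (IZR m * fst w1 + IZR n * fst w2, IZR m * snd w1 + IZR n * snd w2).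
Definition lattice_basis (w1 w2 : C) : Prop := fst w1 * snd w2 - snd w1 * fst w2 <> 0.
Definition in_dual (w1 w2 : C) (d : C) : Prop :=
  forall g, in_lattice w1 w2 g -> is_int (cdot d g).

Definition beta (beta0 : C) (z : C) : R := 2 * PI * cdot beta0 z.
Definition Nrm (beta0 : C) (z : C) : quat := qmul (expj (beta beta0 z)) qi.
(* df = e^{j beta/2} dz g, evaluated on d/dx (dz = 1) and d/dy (dz = i) *)
Definition dfx (beta0 : C) (g : C -> quat) (z : C) : quat :=
  qmul (expj (beta beta0 z / 2)) (g z).
Definition dfy (beta0 : C) (g : C -> quat) (z : C) : quat :=
  qmul (qmul (expj (beta beta0 z / 2)) qi) (g z).

Definition ham_stat_torus (w1 w2 beta0 : C) (g : C -> quat) (f : C -> quat) : Prop :=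
  lattice_basis w1 w2 /\ beta0 <> 0%C /\ in_dual w1 w2 beta0 /\
  (forall z, g z <> qzero) /\
  (forall gam z, in_lattice w1 w2 gam -> f (Cplus z gam) = f z) /\
  (forall z, is_dx f z (dfx beta0 g z) /\ is_dy f z (dfy beta0 g z)).

(* H is defined by (dN)' = -df H, with (dN)' = 1/2 (dN - N *dN) and
   *w(d/dx) = w(d/dy), *w(d/dy) = -w(d/dx)  (convention *dz = i dz) *)
Definition is_mean_curv (beta0 : C) (g : C -> quat) (H : C -> quat) : Prop :=
  forall z Nx Ny, is_dx (Nrm beta0) z Nx -> is_dy (Nrm beta0) z Ny ->
    qscal (1/2) (qsub Nx (qmul (Nrm beta0 z) Ny)) = qopp (qmul (dfx beta0 g z) (H z)) /\
    qscal (1/2) (qadd Ny (qmul (Nrm beta0 z) Nx)) = qopp (qmul (dfy beta0 g z) (H z)).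

Definition amu (mu : C) : C := Cmult (RtoC (1/2)) (Cplus mu (Cinv mu)).
Definition bmu (mu : C) : C := Cmult (Cmult (RtoC (1/2)) (Cminus (Cinv mu) mu)) Ci.

(* the H-valued 1-form  1/2 df H (N alpha (a-1) + alpha b)  applied to a tangent vector,
   given df on that vector *)
Definition dmu_term (beta0 : C) (H : C -> quat) (mu : C) (alpha : C -> quat)
  (dfv : quat) (z : C) : quat :=
  qscal (1/2) (qmul (qmul dfv (H z))
    (qadd (qmul (qmul (Nrm beta0 z) (alpha z)) (embC (Cminus (amu mu) 1%C)))
          (qmul (alpha z) (embC (bmu mu))))).

Definition dmu_parallel (beta0 : C) (g : C -> quat) (H : C -> quat) (mu : C)
  (alpha : C -> quat) : Prop :=
  forall z, exists ax ay, is_dx alpha z ax /\ is_dy alpha z ay /\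
    qadd ax (dmu_term beta0 H mu alpha (dfx beta0 g z) z) = qzero /\
    qadd ay (dmu_term beta0 H mu alpha (dfy beta0 g z) z) = qzero.

Definition e_del (d : C) (z : C) : C := (cos (2 * PI * cdot d z), sin (2 * PI * cdot d z)).
Definition lambda_del (beta0 A B d : C) : C :=
  Cmult (Cdiv (RtoC 2) beta0) (Cminus (Cminus d (Cmult Ci A)) B).
Definition in_GammaAB (w1 w2 beta0 A B d : C) : Prop :=
  in_dual w1 w2 (Cminus d (Cmult (RtoC (1/2)) beta0)) /\
  cnorm2 (Cminus d B) - cnorm2 A = cnorm2 beta0 / 4 /\
  cdot (Cminus d B) A = 0.
Definition mono_base (beta0 A B d : C) (z : C) : quat :=
  qmul (qmul (qmul (expj (beta beta0 z / 2))
                   (qsub qone (qmul qk (embC (lambda_del beta0 A B d)))))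
             (embC (e_del (Cminus d B) z)))
       (embC (RtoC (exp (2 * PI * cdot A z)))).

Definition monochromatic (w1 w2 beta0 : C) (alpha : C -> quat) : Prop :=
  exists (A B d c : C), in_GammaAB w1 w2 beta0 A B d /\ c <> 0%C /\
    forall z, alpha z = qmul (mono_base beta0 A B d z) (embC c).

(** A monochromatic section factors as [α = e^{jβ/2} (1 - kλ) φ] with [φ] a complex
    exponential, [dφ = φ ⋅ 2π(⟨A,dz⟩ + i⟨D,dz⟩)] where [D = δ - B]. The frame [e^{jβ/2}]
    conjugates the left normal to [i] and [df H = -(dN)'] to constant quaternions, so on
    [∂x] and [∂y] the equation [d^μ α = 0] becomes a constant quaternion equation, affine
    in [(a - 1, b)]. By definition [λ β₀ = 2 (D - iA)], and the conditions defining
    [Γ*_{A,B}] say [(D - iA) conj(D + iA) = |β₀|²/4], that is [D + iA = (D - iA)/|λ|²];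
    with this both equations hold for [μ = λ⁻²]. Conversely the [∂y] equation determines
    [(a - 1, b)], because [(a', b) ↦ i(1 - kλ)a' + (1 - kλ)b] is injective for [λ ≠ 0],
    and [μ = a + ib]. *)

From Stdlib Require Import Reals Lra FunctionalExtensionality.
From Coquelicot Require Import Coquelicot.
Open Scope R_scope.

Definition qconj (p : quat) : quat := Quat (q0 p) (- q1 p) (- q2 p) (- q3 p).
Definition qnorm2 (p : quat) : R := q0 p * q0 p + q1 p * q1 p + q2 p * q2 p + q3 p * q3 p.

(* [cbv] evaluates the inner products first: unfolding nested [qmul]s before reducing
   would copy each argument sixteen times per level. *)
Ltac quat_field :=
  repeat match goal with
  | q : quat |- ?G =>
      match G with context [q] =>
        let a := fresh "a" in let b := fresh "b" in let c := fresh "c" in let d := fresh "d" in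
        destruct q as [a b c d] end
  | z : C |- ?G =>
      match G with context [z] =>
        let x := fresh "x" in let y := fresh "y" in destruct z as [x y] end
  end;
  cbv [qsub qadd qopp qscal qmul qconj embC qzero qone qi qj qk q0 q1 q2 q3 fst snd];
  f_equal; first [ring | field].

Lemma qmul_assoc (p q r : quat) : qmul (qmul p q) r = qmul p (qmul q r).
Proof. quat_field. Qed.

Lemma qmul_qscal_r (r : R) (p q : quat) : qmul p (qscal r q) = qscal r (qmul p q).
Proof. quat_field. Qed.

Lemma qmul_qscal_l (r : R) (p q : quat) : qmul (qscal r p) q = qscal r (qmul p q).
Proof. quat_field. Qed.

Lemma qmul_0_l (p : quat) : qmul qzero p = qzero.
Proof. quat_field. Qed.

Lemma qmul_0_r (p : quat) : qmul p qzero = qzero.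
Proof. quat_field. Qed.

Lemma qopp_involutive (p : quat) : qopp (qopp p) = p.
Proof. quat_field. Qed.

Lemma qmul_qconj_l (p q : quat) : qmul (qconj p) (qmul p q) = qscal (qnorm2 p) q.
Proof. unfold qnorm2; quat_field. Qed.

Lemma qmul_qconj_r (p q : quat) : qmul (qmul q p) (qconj p) = qscal (qnorm2 p) q.
Proof. unfold qnorm2; quat_field. Qed.

Lemma qscal_inj (r : R) (p q : quat) : r <> 0 -> qscal r p = qscal r q -> p = q.
Proof.
  intros hr h. destruct p as [p0 p1 p2 p3], q as [r0 r1 r2 r3].
  unfold qscal in h; cbn [q0 q1 q2 q3] in h. injection h; intros.
  f_equal; apply (Rmult_eq_reg_l r); assumption.
Qed.

Lemma qmul_inj_l (p q r : quat) : qnorm2 p <> 0 -> qmul p q = qmul p r -> q = r.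
Proof.
  intros hp h. apply (qscal_inj (qnorm2 p)); [exact hp|].
  now rewrite <- !qmul_qconj_l, h.
Qed.

Lemma qmul_inj_r (p q r : quat) : qnorm2 p <> 0 -> qmul q p = qmul r p -> q = r.
Proof.
  intros hp h. apply (qscal_inj (qnorm2 p)); [exact hp|].
  now rewrite <- !qmul_qconj_r, h.
Qed.

Lemma qmul_sandwich_eq0 (p q x : quat) :
  qnorm2 p <> 0 -> qnorm2 q <> 0 -> qmul p (qmul x q) = qzero -> x = qzero.
Proof.
  intros hp hq h. apply (qmul_inj_r q); [exact hq|]. apply (qmul_inj_l p); [exact hp|].
  now rewrite h, qmul_0_l, qmul_0_r.
Qed.

Lemma qadd_inj_l (p q r : quat) : qadd p q = qadd p r -> q = r.
Proof.
  destruct p as [p0 p1 p2 p3], q as [u0 u1 u2 u3], r as [v0 v1 v2 v3].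
  unfold qadd; cbn [q0 q1 q2 q3]. intro h. injection h; intros. f_equal; lra.
Qed.

Lemma qnorm2_expj (t : R) : qnorm2 (expj t) = 1.
Proof.
  unfold qnorm2, expj; cbn [q0 q1 q2 q3].
  pose proof (sin2_cos2 t) as h. unfold Rsqr in h. lra.
Qed.

Lemma qnorm2_embC (z : C) : qnorm2 (embC z) = cnorm2 z.
Proof. unfold qnorm2, embC, cnorm2, cdot; cbn [q0 q1 q2 q3]. ring. Qed.

Lemma cnorm2_neq0 (z : C) : z <> 0%C -> cnorm2 z <> 0.
Proof.
  destruct z as [x y]. unfold cnorm2, cdot; cbn [fst snd]. intros hz h.
  apply hz. assert (x = 0) by nra. assert (y = 0) by nra. subst. reflexivity.
Qed.

Definition expj_half (beta0 z : C) : quat := expj (beta beta0 z / 2).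

Lemma expj_double (t : R) : expj (2 * t) = qmul (expj t) (expj t).
Proof.
  unfold expj, qmul; cbn [q0 q1 q2 q3]. rewrite cos_2a, sin_2a. f_equal; ring.
Qed.

Lemma qj_expj (t : R) : qmul qj (expj t) = qmul (expj t) qj.
Proof. unfold expj; quat_field. Qed.

(* [i e^{jt} = e^{-jt} i] *)
Lemma expj_qi_expj (t : R) : qmul (expj t) (qmul qi (expj t)) = qi.
Proof.
  pose proof (sin2_cos2 t) as h. unfold Rsqr in h.
  unfold expj, qi, qmul; cbn [q0 q1 q2 q3]. f_equal; lra.
Qed.

Lemma Nrm_expj_half (beta0 z : C) (p : quat) :
  qmul (Nrm beta0 z) (qmul (expj_half beta0 z) p) = qmul (expj_half beta0 z) (qmul qi p).
Proof.
  unfold Nrm, expj_half.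
  replace (beta beta0 z) with (2 * (beta beta0 z / 2)) at 1 by field.
  rewrite expj_double, !qmul_assoc, <- (qmul_assoc qi), <- (qmul_assoc _ (qmul qi _)).
  rewrite expj_qi_expj. reflexivity.
Qed.

Definition dNrm (b : R) (beta0 z : C) : quat := qscal (2 * PI * b) (qmul qj (Nrm beta0 z)).

Lemma Nrm_dx (beta0 z : C) : is_dx (Nrm beta0) z (dNrm (fst beta0) beta0 z).
Proof.
  destruct z as [x y], beta0 as [b1 b2].
  unfold is_dx, is_deriv_q, dNrm, Nrm, beta, cdot, qmul, qscal, expj, qi, qj;
    cbn [q0 q1 q2 q3 fst snd].
  unfold Rdiv; split; [|split; [|split]]; auto_derive; auto; field.
Qed.

Lemma Nrm_dy (beta0 z : C) : is_dy (Nrm beta0) z (dNrm (snd beta0) beta0 z).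
Proof.
  destruct z as [x y], beta0 as [b1 b2].
  unfold is_dy, is_deriv_q, dNrm, Nrm, beta, cdot, qmul, qscal, expj, qi, qj;
    cbn [q0 q1 q2 q3 fst snd].
  unfold Rdiv; split; [|split; [|split]]; auto_derive; auto; field.
Qed.

(* [-(dN)'] on [∂x], [∂y], conjugated by the frame [e^{jβ/2}] *)
Definition dfH_frame_x (beta0 : C) : quat := Quat 0 0 (PI * snd beta0) (PI * fst beta0).
Definition dfH_frame_y (beta0 : C) : quat := Quat 0 0 (- (PI * fst beta0)) (PI * snd beta0).

Lemma dNrm_expj_half (b : R) (beta0 z : C) (p : quat) :
  qmul (dNrm b beta0 z) (qmul (expj_half beta0 z) p) =
  qscal (2 * PI * b) (qmul (expj_half beta0 z) (qmul qj (qmul qi p))).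
Proof.
  unfold dNrm. rewrite qmul_qscal_l, !qmul_assoc, Nrm_expj_half.
  unfold expj_half. rewrite <- qmul_assoc, qj_expj, qmul_assoc. reflexivity.
Qed.

Lemma dN'x_expj_half (beta0 z : C) (p : quat) :
  qmul (qopp (qscal (1/2) (qsub (dNrm (fst beta0) beta0 z)
                               (qmul (Nrm beta0 z) (dNrm (snd beta0) beta0 z)))))
       (qmul (expj_half beta0 z) p) =
  qmul (expj_half beta0 z) (qmul (dfH_frame_x beta0) p).
Proof.
  set (e := expj_half beta0 z). set (N := Nrm beta0 z).
  replace (qmul (qopp _) (qmul e p)) with
    (qadd (qscal (- (1/2)) (qmul (dNrm (fst beta0) beta0 z) (qmul e p)))
          (qscal (1/2) (qmul N (qmul (dNrm (snd beta0) beta0 z) (qmul e p)))))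
    by (clearbody e N; generalize (dNrm (fst beta0) beta0 z) (dNrm (snd beta0) beta0 z);
        intros d1 d2; quat_field).
  unfold e, N; clear e N. rewrite !dNrm_expj_half, qmul_qscal_r, Nrm_expj_half.
  generalize (expj_half beta0 z); intro e.
  unfold dfH_frame_x; quat_field.
Qed.

Lemma dN'y_expj_half (beta0 z : C) (p : quat) :
  qmul (qopp (qscal (1/2) (qadd (dNrm (snd beta0) beta0 z)
                               (qmul (Nrm beta0 z) (dNrm (fst beta0) beta0 z)))))
       (qmul (expj_half beta0 z) p) =
  qmul (expj_half beta0 z) (qmul (dfH_frame_y beta0) p).
Proof.
  set (e := expj_half beta0 z). set (N := Nrm beta0 z).
  replace (qmul (qopp _) (qmul e p)) with
    (qadd (qscal (- (1/2)) (qmul (dNrm (snd beta0) beta0 z) (qmul e p)))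
          (qscal (- (1/2)) (qmul N (qmul (dNrm (fst beta0) beta0 z) (qmul e p)))))
    by (clearbody e N; generalize (dNrm (fst beta0) beta0 z) (dNrm (snd beta0) beta0 z);
        intros d1 d2; quat_field).
  unfold e, N; clear e N. rewrite !dNrm_expj_half, qmul_qscal_r, Nrm_expj_half.
  generalize (expj_half beta0 z); intro e.
  unfold dfH_frame_y; quat_field.
Qed.

Lemma dfH_frame_y_neq0 (beta0 : C) : beta0 <> 0%C -> qnorm2 (dfH_frame_y beta0) <> 0.
Proof.
  intro hb. apply cnorm2_neq0 in hb. pose proof PI_RGT_0.
  unfold qnorm2, dfH_frame_y, cnorm2, cdot in *; cbn [q0 q1 q2 q3] in *.
  replace (0 * 0 + 0 * 0 + - (PI * fst beta0) * - (PI * fst beta0)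
           + PI * snd beta0 * (PI * snd beta0))
    with ((PI * PI) * (fst beta0 * fst beta0 + snd beta0 * snd beta0)) by ring.
  apply Rmult_integral_contrapositive_currified; [nra | exact hb].
Qed.

Section MeanCurvature.

Variables (beta0 : C) (g H : C -> quat).
Hypothesis hH : is_mean_curv beta0 g H.

Lemma dfHx_expj_half (z : C) (p : quat) :
  qmul (qmul (dfx beta0 g z) (H z)) (qmul (expj_half beta0 z) p) =
  qmul (expj_half beta0 z) (qmul (dfH_frame_x beta0) p).
Proof.
  destruct (hH z _ _ (Nrm_dx beta0 z) (Nrm_dy beta0 z)) as [hx _].
  rewrite <- (qopp_involutive (qmul (dfx beta0 g z) (H z))), <- hx. apply dN'x_expj_half.
Qed.

Lemma dfHy_expj_half (z : C) (p : quat) :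
  qmul (qmul (dfy beta0 g z) (H z)) (qmul (expj_half beta0 z) p) =
  qmul (expj_half beta0 z) (qmul (dfH_frame_y beta0) p).
Proof.
  destruct (hH z _ _ (Nrm_dx beta0 z) (Nrm_dy beta0 z)) as [_ hy].
  rewrite <- (qopp_involutive (qmul (dfy beta0 g z) (H z))), <- hy. apply dN'y_expj_half.
Qed.

End MeanCurvature.

Definition one_sub_k (l : C) : quat := qsub qone (qmul qk (embC l)).

Definition mono_scalar (A D c z : C) : C :=
  Cmult (Cmult (e_del D z) (RtoC (exp (2 * PI * cdot A z)))) c.

Definition mono_section (beta0 l A D c : C) (z : C) : quat :=
  qmul (expj_half beta0 z) (qmul (one_sub_k l) (embC (mono_scalar A D c z))).

Lemma mono_base_section (beta0 A B d c z : C) :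
  qmul (mono_base beta0 A B d z) (embC c) =
  mono_section beta0 (lambda_del beta0 A B d) A (Cminus d B) c z.
Proof.
  unfold mono_base, mono_section, mono_scalar, expj_half, one_sub_k.
  generalize (expj (beta beta0 z / 2)) (qsub qone (qmul qk (embC (lambda_del beta0 A B d))))
    (e_del (Cminus d B) z) (exp (2 * PI * cdot A z)).
  intros e u w r. unfold Cmult, RtoC. quat_field.
Qed.

Lemma mono_scalar_neq0 (A D c z : C) : c <> 0%C -> mono_scalar A D c z <> 0%C.
Proof.
  intro hc. unfold mono_scalar. apply Cmult_neq_0; [apply Cmult_neq_0|exact hc].
  - unfold e_del. intro h. injection h as hcos hsin.
    pose proof (sin2_cos2 (2 * PI * cdot D z)) as h1.
    rewrite hcos, hsin in h1. unfold Rsqr in h1. lra.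
  - intro h. injection h as h. pose proof (exp_pos (2 * PI * cdot A z)). lra.
Qed.

(* [π β₀ j] comes from differentiating the frame, [2π (A + iD)] from [φ]. *)
Definition mono_dcoef (bx Ax Dx : R) (l : C) : quat :=
  qadd (qscal (PI * bx) (qmul qj (one_sub_k l)))
       (qmul (one_sub_k l) (embC (2 * PI * Ax, 2 * PI * Dx))).

Lemma mono_section_dx (beta0 l A D c z : C) :
  is_dx (mono_section beta0 l A D c) z
    (qmul (expj_half beta0 z)
          (qmul (mono_dcoef (fst beta0) (fst A) (fst D) l) (embC (mono_scalar A D c z)))).
Proof.
  destruct z as [x y], beta0 as [b1 b2], A as [A1 A2], D as [D1 D2], l as [l1 l2],
    c as [c1 c2].
  unfold is_dx, is_deriv_q, mono_section, mono_dcoef, mono_scalar, expj_half, one_sub_k, e_del,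
    beta, cdot, expj, Cmult, RtoC;
    cbv [qsub qadd qopp qscal qmul embC qone qj qk q0 q1 q2 q3 fst snd].
  unfold Rdiv; split; [|split; [|split]]; auto_derive; auto; field.
Qed.

Lemma mono_section_dy (beta0 l A D c z : C) :
  is_dy (mono_section beta0 l A D c) z
    (qmul (expj_half beta0 z)
          (qmul (mono_dcoef (snd beta0) (snd A) (snd D) l) (embC (mono_scalar A D c z)))).
Proof.
  destruct z as [x y], beta0 as [b1 b2], A as [A1 A2], D as [D1 D2], l as [l1 l2],
    c as [c1 c2].
  unfold is_dy, is_deriv_q, mono_section, mono_dcoef, mono_scalar, expj_half, one_sub_k, e_del,
    beta, cdot, expj, Cmult, RtoC;
    cbv [qsub qadd qopp qscal qmul embC qone qj qk q0 q1 q2 q3 fst snd].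
  unfold Rdiv; split; [|split; [|split]]; auto_derive; auto; field.
Qed.

Definition dmu_coef (l a b : C) : quat :=
  qadd (qmul (qmul qi (one_sub_k l)) (embC a)) (qmul (one_sub_k l) (embC b)).

Definition dmu_defect (bx Ax Dx : R) (Q : quat) (l mu : C) : quat :=
  qadd (mono_dcoef bx Ax Dx l)
       (qscal (1/2) (qmul Q (dmu_coef l (Cminus (amu mu) 1%C) (bmu mu)))).

Lemma dmu_term_mono_section (beta0 : C) (H : C -> quat) (mu l A D c : C) (dfv Q : quat)
    (z : C) :
  (forall p, qmul (qmul dfv (H z)) (qmul (expj_half beta0 z) p) =
             qmul (expj_half beta0 z) (qmul Q p)) ->
  dmu_term beta0 H mu (mono_section beta0 l A D c) dfv z =
  qscal (1/2) (qmul (expj_half beta0 z)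
    (qmul Q (qmul (dmu_coef l (Cminus (amu mu) 1%C) (bmu mu)) (embC (mono_scalar A D c z))))).
Proof.
  intro hQ. unfold dmu_term, mono_section.
  rewrite Nrm_expj_half, <- hQ. f_equal. f_equal.
  unfold dmu_coef. generalize (expj_half beta0 z) (one_sub_k l) (mono_scalar A D c z)
    (Cminus (amu mu) 1%C) (bmu mu).
  intros e u w a b. quat_field.
Qed.

Lemma is_deriv_q_unique (F : R -> quat) (t : R) (v w : quat) :
  is_deriv_q F t v -> is_deriv_q F t w -> v = w.
Proof.
  intros (hv0 & hv1 & hv2 & hv3) (hw0 & hw1 & hw2 & hw3).
  destruct v as [v0 v1 v2 v3], w as [w0 w1 w2 w3]; cbn [q0 q1 q2 q3] in *.
  apply is_derive_unique in hv0, hv1, hv2, hv3, hw0, hw1, hw2, hw3.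
  congruence.
Qed.

Section ParallelSection.

Variables (beta0 : C) (g H : C -> quat) (mu l A D c : C).
Hypothesis hH : is_mean_curv beta0 g H.

Lemma dmu_mono_section_x (z : C) :
  qadd (qmul (expj_half beta0 z)
             (qmul (mono_dcoef (fst beta0) (fst A) (fst D) l) (embC (mono_scalar A D c z))))
       (dmu_term beta0 H mu (mono_section beta0 l A D c) (dfx beta0 g z) z) =
  qmul (expj_half beta0 z)
       (qmul (dmu_defect (fst beta0) (fst A) (fst D) (dfH_frame_x beta0) l mu)
             (embC (mono_scalar A D c z))).
Proof.
  rewrite (dmu_term_mono_section _ _ _ _ _ _ _ _ (dfH_frame_x beta0) _
             (dfHx_expj_half _ _ _ hH z)).
  unfold dmu_defect. generalize (expj_half beta0 z) (mono_dcoef (fst beta0) (fst A) (fst D) l)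
    (dfH_frame_x beta0) (dmu_coef l (Cminus (amu mu) 1%C) (bmu mu)) (mono_scalar A D c z).
  intros e m q w s. quat_field.
Qed.

Lemma dmu_mono_section_y (z : C) :
  qadd (qmul (expj_half beta0 z)
             (qmul (mono_dcoef (snd beta0) (snd A) (snd D) l) (embC (mono_scalar A D c z))))
       (dmu_term beta0 H mu (mono_section beta0 l A D c) (dfy beta0 g z) z) =
  qmul (expj_half beta0 z)
       (qmul (dmu_defect (snd beta0) (snd A) (snd D) (dfH_frame_y beta0) l mu)
             (embC (mono_scalar A D c z))).
Proof.
  rewrite (dmu_term_mono_section _ _ _ _ _ _ _ _ (dfH_frame_y beta0) _
             (dfHy_expj_half _ _ _ hH z)).
  unfold dmu_defect. generalize (expj_half beta0 z) (mono_dcoef (snd beta0) (snd A) (snd D) l)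
    (dfH_frame_y beta0) (dmu_coef l (Cminus (amu mu) 1%C) (bmu mu)) (mono_scalar A D c z).
  intros e m q w s. quat_field.
Qed.

Hypothesis hc : c <> 0%C.

Lemma mono_section_parallel_iff :
  dmu_parallel beta0 g H mu (mono_section beta0 l A D c) <->
  dmu_defect (fst beta0) (fst A) (fst D) (dfH_frame_x beta0) l mu = qzero /\
  dmu_defect (snd beta0) (snd A) (snd D) (dfH_frame_y beta0) l mu = qzero.
Proof.
  assert (he : forall z, qnorm2 (expj_half beta0 z) <> 0).
  { intro z. unfold expj_half. rewrite qnorm2_expj. lra. }
  assert (hs : forall z, qnorm2 (embC (mono_scalar A D c z)) <> 0).
  { intro z. rewrite qnorm2_embC. apply cnorm2_neq0, mono_scalar_neq0, hc. }
  split.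
  - intro hpar. destruct (hpar 0%C) as (ax & ay & hax & hay & hx & hy).
    rewrite (is_deriv_q_unique _ _ _ _ hax (mono_section_dx beta0 l A D c 0%C)),
      dmu_mono_section_x in hx.
    rewrite (is_deriv_q_unique _ _ _ _ hay (mono_section_dy beta0 l A D c 0%C)),
      dmu_mono_section_y in hy.
    split; [exact (qmul_sandwich_eq0 _ _ _ (he 0%C) (hs 0%C) hx)
          |exact (qmul_sandwich_eq0 _ _ _ (he 0%C) (hs 0%C) hy)].
  - intros [hx hy] z. do 2 eexists.
    split; [apply mono_section_dx|]. split; [apply mono_section_dy|].
    rewrite dmu_mono_section_x, dmu_mono_section_y, hx, hy, !qmul_0_l, !qmul_0_r.
    split; reflexivity.
Qed.

End ParallelSection.

Definition mu_of_lambda (l : C) : C := Cinv (Cmult l l).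

Lemma mu_of_lambda_neq0 (l : C) : l <> 0%C -> mu_of_lambda l <> 0%C.
Proof.
  intros hl h. apply C1_nz.
  rewrite <- (Cinv_l (Cmult l l)) by (apply Cmult_neq_0; exact hl).
  unfold mu_of_lambda in h. rewrite h. apply Cmult_0_l.
Qed.

Lemma Cinv_mu_of_lambda (l : C) : l <> 0%C -> Cinv (mu_of_lambda l) = Cmult l l.
Proof.
  intro hl. unfold mu_of_lambda. field. exact hl.
Qed.

Lemma mu_of_lambda_eq (l1 l2 : R) : l1 * l1 + l2 * l2 <> 0 ->
  mu_of_lambda (l1, l2) =
  ((l1 * l1 - l2 * l2) / ((l1 * l1 + l2 * l2) * (l1 * l1 + l2 * l2)),
   - (2 * l1 * l2) / ((l1 * l1 + l2 * l2) * (l1 * l1 + l2 * l2))).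
Proof.
  intro hn. unfold mu_of_lambda, Cinv, Cmult; cbn [fst snd].
  replace ((l1 * l1 - l2 * l2) ^ 2 + (l1 * l2 + l2 * l1) ^ 2)
    with ((l1 * l1 + l2 * l2) * (l1 * l1 + l2 * l2)) by ring.
  f_equal; field; exact hn.
Qed.

Lemma amu_add_i_bmu (mu : C) : Cplus (amu mu) (Cmult Ci (bmu mu)) = mu.
Proof.
  destruct mu as [m1 m2]. unfold amu, bmu. generalize (Cinv (m1, m2)); intros [v1 v2].
  unfold Cminus, Cplus, Cmult, Copp, Ci, RtoC; cbn [fst snd]. f_equal; field.
Qed.

Lemma dmu_coef_inj (l a b a' b' : C) :
  l <> 0%C -> dmu_coef l a b = dmu_coef l a' b' -> a = a' /\ b = b'.
Proof.
  intros hl h. apply cnorm2_neq0 in hl.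
  destruct l as [l1 l2], a as [x1 x2], b as [y1 y2], a' as [x1' x2'], b' as [y1' y2'].
  unfold cnorm2, cdot in hl; cbn [fst snd] in hl.
  unfold dmu_coef, one_sub_k in h.
  cbv [qsub qadd qopp qmul embC qone qi qk q0 q1 q2 q3 fst snd] in h.
  injection h as e0 e1 e2 e3.
  assert (ey1 : y1 = y1' + (x2 - x2')) by lra.
  assert (ey2 : y2 = y2' - (x1 - x1')) by lra.
  subst y1 y2.
  (* the j- and k-components now say [λ (a - a') = 0] *)
  assert (hk1 : l1 * (x1 - x1') - l2 * (x2 - x2') = 0) by lra.
  assert (hk2 : l2 * (x1 - x1') + l1 * (x2 - x2') = 0) by lra.
  assert (hu1 : (l1 * l1 + l2 * l2) * (x1 - x1') = 0).
  { replace ((l1 * l1 + l2 * l2) * (x1 - x1'))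
      with (l1 * (l1 * (x1 - x1') - l2 * (x2 - x2')) + l2 * (l2 * (x1 - x1') + l1 * (x2 - x2')))
      by ring.
    rewrite hk1, hk2. ring. }
  assert (hu2 : (l1 * l1 + l2 * l2) * (x2 - x2') = 0).
  { replace ((l1 * l1 + l2 * l2) * (x2 - x2'))
      with (l1 * (l2 * (x1 - x1') + l1 * (x2 - x2')) - l2 * (l1 * (x1 - x1') - l2 * (x2 - x2')))
      by ring.
    rewrite hk1, hk2. ring. }
  apply Rmult_integral in hu1 as [hu1 | hu1]; [contradiction|].
  apply Rmult_integral in hu2 as [hu2 | hu2]; [contradiction|].
  split; f_equal; lra.
Qed.

Lemma dmu_defect_inj (bx Ax Dx : R) (Q : quat) (l mu mu' : C) :
  qnorm2 Q <> 0 -> l <> 0%C ->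
  dmu_defect bx Ax Dx Q l mu = dmu_defect bx Ax Dx Q l mu' -> mu = mu'.
Proof.
  intros hQ hl h. unfold dmu_defect in h.
  apply qadd_inj_l, qscal_inj in h; [|lra].
  apply qmul_inj_l in h; [|exact hQ].
  apply dmu_coef_inj in h as [ha hb]; [|exact hl].
  rewrite <- (amu_add_i_bmu mu), <- (amu_add_i_bmu mu'), hb.
  replace (amu mu) with (Cplus (Cminus (amu mu) 1%C) 1%C) by ring.
  rewrite ha. f_equal. ring.
Qed.

Lemma gammaAB_solution (b1 b2 A1 A2 D1 D2 l1 l2 : R) :
  b1 * b1 + b2 * b2 <> 0 ->
  (D1 * D1 + D2 * D2) - (A1 * A1 + A2 * A2) = (b1 * b1 + b2 * b2) / 4 ->
  D1 * A1 + D2 * A2 = 0 ->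
  D1 + A2 = (l1 * b1 - l2 * b2) / 2 ->
  D2 - A1 = (l1 * b2 + l2 * b1) / 2 ->
  l1 * l1 + l2 * l2 <> 0 /\
  (D1 - A2) * (l1 * l1 + l2 * l2) = D1 + A2 /\
  (D2 + A1) * (l1 * l1 + l2 * l2) = D2 - A1.
Proof.
  intros hb hnorm horth hp1 hp2.
  (* [(D - iA) conj(D + iA) = |β₀|²/4] and [|D - iA|² = |λ|² |β₀|²/4] *)
  assert (hre : (D1 + A2) * (D1 - A2) + (D2 - A1) * (D2 + A1) = (b1 * b1 + b2 * b2) / 4).
  { rewrite <- hnorm. ring. }
  assert (him : (D2 - A1) * (D1 - A2) - (D1 + A2) * (D2 + A1) = 0).
  { replace ((D2 - A1) * (D1 - A2) - (D1 + A2) * (D2 + A1)) with (- 2 * (D1 * A1 + D2 * A2))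
      by ring.
    rewrite horth. ring. }
  assert (hP : (D1 + A2) * (D1 + A2) + (D2 - A1) * (D2 - A1) =
               (l1 * l1 + l2 * l2) * (b1 * b1 + b2 * b2) / 4).
  { rewrite hp1, hp2. field. }
  set (n := l1 * l1 + l2 * l2) in *. set (nb := b1 * b1 + b2 * b2) in *.
  assert (hn : n <> 0).
  { intro hn0. rewrite hn0 in hP.
    assert (hsq : (D1 + A2) * (D1 + A2) + (D2 - A1) * (D2 - A1) = 0) by (rewrite hP; field).
    apply Rplus_sqr_eq_0 in hsq as [h1 h2].
    rewrite h1, h2 in hre. apply hb. lra. }
  assert (hnb : nb / 4 <> 0) by lra.
  split; [exact hn|]. split.
  - apply (Rmult_eq_reg_r (nb / 4)); [|exact hnb].
    transitivity ((D1 - A2) * ((D1 + A2) * (D1 + A2) + (D2 - A1) * (D2 - A1)));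
      [rewrite hP; field|].
    transitivity ((D1 + A2) * ((D1 + A2) * (D1 - A2) + (D2 - A1) * (D2 + A1))
                  + (D2 - A1) * ((D2 - A1) * (D1 - A2) - (D1 + A2) * (D2 + A1))); [ring|].
    rewrite hre, him. ring.
  - apply (Rmult_eq_reg_r (nb / 4)); [|exact hnb].
    transitivity ((D2 + A1) * ((D1 + A2) * (D1 + A2) + (D2 - A1) * (D2 - A1)));
      [rewrite hP; field|].
    transitivity ((D2 - A1) * ((D1 + A2) * (D1 - A2) + (D2 - A1) * (D2 + A1))
                  - (D1 + A2) * ((D2 - A1) * (D1 - A2) - (D1 + A2) * (D2 + A1))); [ring|].
    rewrite hre, him. ring.
Qed.

Lemma dmu_defect_mu_of_lambda (b1 b2 A1 A2 D1 D2 l1 l2 : R) :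
  l1 * l1 + l2 * l2 <> 0 ->
  D1 + A2 = (l1 * b1 - l2 * b2) / 2 ->
  D2 - A1 = (l1 * b2 + l2 * b1) / 2 ->
  (D1 - A2) * (l1 * l1 + l2 * l2) = D1 + A2 ->
  (D2 + A1) * (l1 * l1 + l2 * l2) = D2 - A1 ->
  dmu_defect b1 A1 D1 (dfH_frame_x (b1, b2)) (l1, l2) (mu_of_lambda (l1, l2)) = qzero /\
  dmu_defect b2 A2 D2 (dfH_frame_y (b1, b2)) (l1, l2) (mu_of_lambda (l1, l2)) = qzero.
Proof.
  intros hn hp1 hp2 hq1 hq2.
  assert (hl : ((l1, l2) : C) <> 0%C).
  { intro h. injection h as h1 h2. apply hn. rewrite h1, h2. ring. }
  set (n := l1 * l1 + l2 * l2) in *.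
  assert (hq1' : D1 - A2 = (l1 * b1 - l2 * b2) / (2 * n)).
  { apply (Rmult_eq_reg_r n); [|exact hn]. rewrite hq1, hp1. field. exact hn. }
  assert (hq2' : D2 + A1 = (l1 * b2 + l2 * b1) / (2 * n)).
  { apply (Rmult_eq_reg_r n); [|exact hn]. rewrite hq2, hp2. field. exact hn. }
  assert (eA1 : A1 = ((l1 * b2 + l2 * b1) / (2 * n) - (l1 * b2 + l2 * b1) / 2) / 2) by lra.
  assert (eA2 : A2 = ((l1 * b1 - l2 * b2) / 2 - (l1 * b1 - l2 * b2) / (2 * n)) / 2) by lra.
  assert (eD1 : D1 = ((l1 * b1 - l2 * b2) / 2 + (l1 * b1 - l2 * b2) / (2 * n)) / 2) by lra.
  assert (eD2 : D2 = ((l1 * b2 + l2 * b1) / 2 + (l1 * b2 + l2 * b1) / (2 * n)) / 2) by lra.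
  clear hp1 hp2 hq1 hq2 hq1' hq2'. subst A1 A2 D1 D2.
  unfold dmu_defect, amu, bmu. rewrite Cinv_mu_of_lambda by exact hl.
  unfold n in *. rewrite mu_of_lambda_eq by exact hn.
  unfold dfH_frame_x, dfH_frame_y, mono_dcoef, dmu_coef, one_sub_k.
  cbv [qsub qadd qopp qscal qmul embC qone qi qj qk qzero q0 q1 q2 q3 fst snd
       Cminus Cplus Cmult Copp Ci RtoC].
  split; f_equal; field; exact hn.
Qed.

Lemma lambda_del_mul (beta0 A B d : C) : beta0 <> 0%C ->
  Cmult (lambda_del beta0 A B d) beta0 = Cmult 2 (Cminus (Cminus d B) (Cmult Ci A)).
Proof. intro hb. unfold lambda_del. field. exact hb. Qed.

Lemma dmu_defect_gammaAB (beta0 A D l : C) :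
  beta0 <> 0%C ->
  cnorm2 D - cnorm2 A = cnorm2 beta0 / 4 ->
  cdot D A = 0 ->
  Cmult l beta0 = Cmult 2 (Cminus D (Cmult Ci A)) ->
  l <> 0%C /\
  dmu_defect (fst beta0) (fst A) (fst D) (dfH_frame_x beta0) l (mu_of_lambda l) = qzero /\
  dmu_defect (snd beta0) (snd A) (snd D) (dfH_frame_y beta0) l (mu_of_lambda l) = qzero.
Proof.
  intros hb hnorm horth hl. apply cnorm2_neq0 in hb.
  destruct beta0 as [b1 b2], A as [A1 A2], D as [D1 D2], l as [l1 l2].
  unfold cnorm2, cdot in hb, hnorm, horth; cbn [fst snd] in hb, hnorm, horth |- *.
  unfold Cmult, Cminus, Cplus, Copp, Ci, RtoC in hl; cbn [fst snd] in hl.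
  injection hl as hl1 hl2.
  destruct (gammaAB_solution b1 b2 A1 A2 D1 D2 l1 l2) as (hn & hq1 & hq2);
    [exact hb | exact hnorm | exact horth | lra | lra |].
  split.
  - intro h. injection h as h1 h2. apply hn. rewrite h1, h2. ring.
  - apply dmu_defect_mu_of_lambda; [exact hn | lra | lra | exact hq1 | exact hq2].
Qed.

Theorem lemma5p3 (w1 w2 beta0 : C) (g f H : C -> quat)
  (hf : ham_stat_torus w1 w2 beta0 g f)
  (hH : is_mean_curv beta0 g H)
  (alpha : C -> quat) (halpha : monochromatic w1 w2 beta0 alpha) :
  exists! mu : C, mu <> 0%C /\ dmu_parallel beta0 g H mu alpha.
Proof.
  destruct hf as (_ & hb0 & _).
  destruct halpha as (A & B & d & c & (_ & hnorm & horth) & hc & hsec).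
  set (l := lambda_del beta0 A B d).
  replace alpha with (mono_section beta0 l A (Cminus d B) c)
    by (apply functional_extensionality; intro z; rewrite hsec; symmetry;
        apply mono_base_section).
  destruct (dmu_defect_gammaAB beta0 A (Cminus d B) l) as (hl & hx & hy);
    [exact hb0 | exact hnorm | exact horth | now apply lambda_del_mul |].
  exists (mu_of_lambda l). split.
  - split; [now apply mu_of_lambda_neq0|].
    apply mono_section_parallel_iff; [exact hH | exact hc | split; assumption].
  - intros mu [_ hpar].
    apply mono_section_parallel_iff in hpar as [_ hy']; [|exact hH | exact hc].
    apply (dmu_defect_inj (snd beta0) (snd A) (snd (Cminus d B)) (dfH_frame_y beta0) l);
      [apply dfH_frame_y_neq0, hb0 | exact hl |].
    now rewrite hy, hy'.
Qed.
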